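(* Let $\phi:\mathbb{R}^n\to\mathbb{R}\cup\{+\infty\}$ be proper, lsc and convex, and $\mu=\mu(\phi)$. Let $(x^-,\chi,\varepsilon)\in\mathrm{dom}\,\phi\times[0,1)\times\mathbb{R}_{++}$ and let $(x,y,\Gamma,\lambda)\in\mathrm{dom}\,\phi\times\mathrm{dom}\,\phi\times\{\text{proper lsc convex functions}\}\times\mathbb{R}_{++}$ satisfy $\Gamma\le\phi$, \[ \phi(y)+\frac{\chi}{2\lambda}\|y-x^-\|^2-\min_{u\in\mathbb{R}^n}\left\{\Gamma(u)+\frac1{2\lambda}\|u-x^-\|^2\right\}\le\varepsilon,\qquad x=\mathrm{argmin}_{u\in\mathbb{R}^n}\left\{\Gamma(u)+\frac1{2\lambda}\|u-x^-\|^2\right\}. \] Assume further that $\Gamma$ is $\nu$-convex for some $\nu\in[0,\mu]$. Then for every $u\in\mathbb{R}^n$, \[ 2\lambda[\phi(y)-\phi(u)]\le\frac{2\lambda\varepsilon}{1-\chi}+\|x^--u\|^2-(1+\sigma)\|x-u\|^2,\qquad \sigma:=\frac{\lambda[\nu(1+\mu\lambda)+\chi(\mu-\nu)]}{1+\mu\lambda+\chi\lambda(\nu-\mu)}. \]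
   Context: For a proper convex function $\psi$, $\mu(\psi)$ is the largest $\mu\ge0$ such that $\psi-\frac\mu2\|\cdot\|^2$ is convex. A function $\Gamma$ is $\nu$-convex if $\Gamma(\alpha a+(1-\alpha)b)\le\alpha\Gamma(a)+(1-\alpha)\Gamma(b)-\frac{\alpha(1-\alpha)\nu}{2}\|a-b\|^2$ for all $a,b\in\mathrm{dom}\,\Gamma$, $\alpha\in[0,1]$. *)

From HB Require Import structures.
From mathcomp Require Import all_boot all_order all_algebra.
From mathcomp Require Import all_classical all_reals all_analysis.
Set Implicit Arguments. Unset Strict Implicit. Unset Printing Implicit Defensive.
Import Order.TTheory GRing.Theory Num.Theory.
Import numFieldNormedType.Exports.
Local Open Scope classical_set_scope.
Local Open Scope ring_scope.

(* Vectors of R^n are row vectors 'rV[R]_n (the topology on 'rV[R]_n is the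
   product topology, i.e. the Euclidean one). *)

Definition sqnorm (R : realType) (n : nat) (v : 'rV[R]_n) : R :=
  \sum_(i < n) (v ord0 i) ^+ 2.

Definition edom (R : realType) (n : nat) (f : 'rV[R]_n -> \bar R) :=
  [set x | (f x < +oo)%E].

Definition proper_fun (R : realType) (n : nat) (f : 'rV[R]_n -> \bar R) : Prop :=
  (forall x, (-oo < f x)%E) /\ (exists x, (f x < +oo)%E).

Definition lsc_fun (R : realType) (n : nat) (f : 'rV[R]_n -> \bar R) : Prop :=
  forall t : R, closed [set x | (f x <= t%:E)%E].

Definition nu_convex (R : realType) (n : nat) (nu : R) (f : 'rV[R]_n -> \bar R) : Prop :=
  forall a b (al : R), edom f a -> edom f b -> 0 <= al <= 1 ->
    (f (al *: a + (1 - al) *: b)%R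
     <= al%:E * f a + (1 - al)%:E * f b
        - (al * (1 - al) * nu / 2 * sqnorm (a - b))%:E)%E.

Definition convex_fun (R : realType) (n : nat) (f : 'rV[R]_n -> \bar R) : Prop :=
  nu_convex 0 f.

Definition closed_convex_proper (R : realType) (n : nat) (f : 'rV[R]_n -> \bar R) : Prop :=
  [/\ proper_fun f, lsc_fun f & convex_fun f].

Definition sub_quad (R : realType) (n : nat) (m : R) (f : 'rV[R]_n -> \bar R) :=
  fun x => (f x - (m / 2 * sqnorm x)%:E)%E.

Definition is_mu (R : realType) (n : nat) (psi : 'rV[R]_n -> \bar R) (mu : R) : Prop :=
  [/\ 0 <= mu, convex_fun (sub_quad mu psi)
    & forall m : R, 0 <= m -> convex_fun (sub_quad m psi) -> m <= mu].

Definition prox_obj (R : realType) (n : nat) (Gamma : 'rV[R]_n -> \bar R)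
  (lam : R) (xm : 'rV[R]_n) : 'rV[R]_n -> \bar R :=
  fun u => (Gamma u + (1 / (2 * lam) * sqnorm (u - xm))%:E)%E.

Definition is_argmin (R : realType) (n : nat) (f : 'rV[R]_n -> \bar R) (x : 'rV[R]_n) : Prop :=
  (forall u, (f x <= f u)%E) /\ (forall u, (f u <= f x)%E -> u = x).

From HB Require Import structures.
From mathcomp Require Import all_boot all_order all_algebra.
From mathcomp Require Import all_classical all_reals all_analysis.
From mathcomp Require Import ring lra.
Import Order.TTheory GRing.Theory Num.Theory.
Import numFieldNormedType.Exports.
Local Open Scope classical_set_scope.
Local Open Scope ring_scope.

(* Put w := chi y + (1 - chi) u.  The prox objective Gamma + ||. - x^-||^2 / (2 lam)
   is (nu + 1/lam)-convex, so its minimiser x satisfies a quadratic growth bound at w.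
   Adding the gap hypothesis at y, Gamma w <= phi w and the mu-convexity of phi on
   [y, u] gives a descent inequality penalised by ||y - u||^2 and
   ||w - x||^2 = ||chi (y - u) - (x - u)||^2; minimising these two quadratic terms
   over y - u leaves exactly (1 + sigma) ||x - u||^2. *)

Section SquaredNorm.
Context {R : realType} {n : nat}.
Implicit Types (a b c X Y : 'rV[R]_n).

Lemma sqnorm_ge0 a : 0 <= sqnorm a.
Proof. by apply: sumr_ge0 => i _; apply: sqr_ge0. Qed.

Lemma sqnormN a : sqnorm (- a) = sqnorm a.
Proof. by rewrite /sqnorm; apply: eq_bigr => i _; rewrite mxE sqrrN. Qed.

Lemma sqnorm_convex_comb (t : R) a b c :
  sqnorm (t *: a + (1 - t) *: b - c) =
  t * sqnorm (a - c) + (1 - t) * sqnorm (b - c) - t * (1 - t) * sqnorm (a - b).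
Proof.
rewrite /sqnorm !mulr_sumr -big_split -sumrB /=.
by apply: eq_bigr => i _; rewrite !mxE; ring.
Qed.

Lemma sqnorm_infconv_le (al be t : R) X Y : 0 <= t ->
  al * be * sqnorm X <= (al + be * t) * (t * al * sqnorm Y + be * sqnorm (t *: Y - X)).
Proof.
move=> t_ge0.
have -> : (al + be * t) * (t * al * sqnorm Y + be * sqnorm (t *: Y - X)) =
    al * be * sqnorm X + t * sqnorm ((al + be * t) *: Y - be *: X).
  rewrite /sqnorm mulrDr !mulr_sumr -!big_split /=.
  by apply: eq_bigr => i _; rewrite !mxE; ring.
by rewrite lerDl mulr_ge0 ?sqnorm_ge0.
Qed.

Definition sigma_rate (mu nu lam chi : R) : R :=
  lam * (nu * (1 + mu * lam) + chi * (mu - nu)) / (1 + mu * lam + chi * lam * (nu - mu)).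

(* sigma is the sharp constant of [sqnorm_infconv_le] for al = (1 - chi) (1 + mu lam),
   be = 1 + nu lam and t = chi. *)
Lemma sigma_rate_le X Y {mu nu lam chi : R} :
  0 <= mu -> 0 <= nu -> 0 < lam -> 0 <= chi -> chi <= 1 ->
  (1 - chi) * (1 + sigma_rate mu nu lam chi) * sqnorm X <=
  chi * (1 - chi) * (1 + mu * lam) * sqnorm Y + (1 + nu * lam) * sqnorm (chi *: Y - X).
Proof.
move=> mu_ge0 nu_ge0 lam_gt0 chi_ge0 chi_le1.
have D_gt0 : 0 < 1 + mu * lam + chi * lam * (nu - mu).
  have := mulr_ge0 mu_ge0 (ltW lam_gt0); have := mulr_ge0 nu_ge0 (ltW lam_gt0); nra.
have -> : (1 - chi) * (1 + sigma_rate mu nu lam chi) =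
    (1 - chi) * (1 + mu * lam) * (1 + nu * lam) / (1 + mu * lam + chi * lam * (nu - mu)).
  by rewrite /sigma_rate; field; apply: lt0r_neq0.
rewrite mulrAC ler_pdivrMr //.
have := sqnorm_infconv_le ((1 - chi) * (1 + mu * lam)) (1 + nu * lam) chi X Y chi_ge0; lra.
Qed.

End SquaredNorm.

Lemma ge0_of_forall_addM_ge0 (R : realFieldType) (a b : R) :
  (forall t, 0 < t <= 1 -> 0 <= a + t * b) -> 0 <= a.
Proof.
move=> h; have [b_le0|b_gt0] := leP b 0.
  by have := h 1; rewrite ltr01 lexx mul1r => /(_ isT); lra.
apply/ler_addgt0Pr => e e_gt0.
set t := Num.min 1 (e / b).
have t_gt0 : 0 < t by rewrite lt_min ltr01 divr_gt0.
have tb_le : t * b <= e by rewrite -ler_pdivlMr // ge_min lexx orbT.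
have := h t; rewrite t_gt0 ge_min lexx /= => /(_ isT); lra.
Qed.

Section NuConvex.
Context {R : realType} {n : nat}.
Implicit Types (f : 'rV[R]_n -> \bar R) (x v : 'rV[R]_n).

Lemma nu_convexD_sqnorm (k : R) (c : 'rV[R]_n) {f} {nu : R} :
  (forall z, -oo < f z)%E -> nu_convex nu f ->
  nu_convex (nu + 2 * k) (fun z => f z + (k * sqnorm (z - c))%:E)%E.
Proof.
move=> f_proper f_conv a b t; rewrite /edom /=.
case Ea: (f a) (f_proper a) => [ra| |] // _ _.
case Eb: (f b) (f_proper b) => [rb| |] // _ _ t01.
apply: le_trans (leeD2r _ (f_conv a b t _ _ t01)) _; rewrite /edom /= ?Ea ?Eb ?ltry //.
rewrite -!EFinM -!EFinD lee_fin sqnorm_convex_comb; lra.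
Qed.

Lemma nu_convex_sub_quad {f} {m : R} :
  (forall z, -oo < f z)%E -> convex_fun (sub_quad m f) -> nu_convex m f.
Proof.
move=> f_proper conv.
have sub_quad_proper z : (-oo < sub_quad m f z)%E.
  by rewrite /sub_quad; case: (f z) (f_proper z) => // r _; rewrite -EFinB ltNyr.
have := nu_convexD_sqnorm (m / 2) 0 sub_quad_proper conv.
have -> : (fun z => sub_quad m f z + (m / 2 * sqnorm (z - 0))%:E)%E = f.
  by apply/funext => z; rewrite /sub_quad subr0 subeK.
by have -> : 0 + 2 * (m / 2) = m by field.
Qed.

Lemma nu_convex_min_growth {f} {nu : R} {x} :
  (forall z, -oo < f z)%E -> nu_convex nu f -> (forall z, f x <= f z)%E ->
  forall v, (f x + (nu / 2 * sqnorm (v - x))%:E <= f v)%E.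
Proof.
move=> f_proper f_conv x_min v.
case Ev: (f v) (f_proper v) => [rv| |] // _; last by rewrite leey.
case Ex: (f x) (f_proper x) (x_min v) => [rx| |] //; rewrite Ev // => _ _.
rewrite -EFinD lee_fin.
suff : 0 <= rv - rx - nu / 2 * sqnorm (v - x) by lra.
apply: (@ge0_of_forall_addM_ge0 _ _ (nu / 2 * sqnorm (v - x))) => t /andP[t_gt0 t_le1].
have := f_conv v x t; rewrite /edom /= Ev Ex !ltry (ltW t_gt0) t_le1.
move=> /(_ isT isT isT) /(le_trans (x_min _)).
rewrite Ex -!EFinM -!EFinD lee_fin => h.
rewrite -(pmulr_rge0 _ t_gt0); lra.
Qed.

Lemma prox_obj_min_growth {Gamma} {nu lam : R} {xm x} :
  (forall z, -oo < Gamma z)%E -> nu_convex nu Gamma ->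
  (forall z, prox_obj Gamma lam xm x <= prox_obj Gamma lam xm z)%E ->
  forall v, (prox_obj Gamma lam xm x + ((nu / 2 + 1 / (2 * lam)) * sqnorm (v - x))%:E
             <= prox_obj Gamma lam xm v)%E.
Proof.
move=> Gamma_proper Gamma_conv x_min v.
have prox_proper z : (-oo < prox_obj Gamma lam xm z)%E.
  by rewrite /prox_obj; case: (Gamma z) (Gamma_proper z) => // r _; rewrite -EFinD ltNyr.
have prox_conv := nu_convexD_sqnorm (1 / (2 * lam)) xm Gamma_proper Gamma_conv.
have := nu_convex_min_growth prox_proper prox_conv x_min v.
by rewrite mulrDl mulrAC divff ?mul1r.
Qed.

End NuConvex.

Theorem proposition3p1 (R : realType) (n : nat)
  (phi : 'rV[R]_n -> \bar R) (mu : R)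
  (xm : 'rV[R]_n) (chi eps : R)
  (x y : 'rV[R]_n) (Gamma : 'rV[R]_n -> \bar R) (lam nu : R) :
  closed_convex_proper phi ->
  is_mu phi mu ->
  edom phi xm -> 0 <= chi < 1 -> 0 < eps ->
  edom phi x -> edom phi y -> closed_convex_proper Gamma -> 0 < lam ->
  (forall u, (Gamma u <= phi u)%E) ->
  is_argmin (prox_obj Gamma lam xm) x ->
  (phi y + (chi / (2 * lam) * sqnorm (y - xm))%:E - prox_obj Gamma lam xm x
     <= eps%:E)%E ->
  0 <= nu <= mu -> nu_convex nu Gamma ->
  let sigma := lam * (nu * (1 + mu * lam) + chi * (mu - nu))
               / (1 + mu * lam + chi * lam * (nu - mu)) in
  forall u : 'rV[R]_n,
    ((2 * lam)%:E * (phi y - phi u)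
     <= (2 * lam * eps / (1 - chi) + sqnorm (xm - u)
         - (1 + sigma) * sqnorm (x - u))%:E)%E.
Proof.
move=> [[phi_proper _] _ _] [mu_ge0 phi_sub_quad_conv _] _ /andP[chi_ge0 chi_lt1] _
  x_dom y_dom [[Gamma_proper _] _ _] lam_gt0 Gamma_le_phi [x_min _] y_gap
  /andP[nu_ge0 _] Gamma_conv sigma u.
have phi_conv := nu_convex_sub_quad phi_proper phi_sub_quad_conv.
case Ey: (phi y) (phi_proper y) (y_dom : (phi y < +oo)%E) => [py| |] // _ _.
case Eu: (phi u) (phi_proper u) => [pu| |] // _; last first.
  by rewrite /= gt0_muleNy ?leNye // lte_fin mulr_gt0.
set w := chi *: y + (1 - chi) *: u.
have := phi_conv y u chi; rewrite /edom /= Ey Eu !ltry chi_ge0 ltW //.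
move=> /(_ isT isT isT); rewrite -!EFinM -!EFinD => phi_w.
case Egw: (Gamma w) (Gamma_proper w) (le_trans (Gamma_le_phi w) phi_w) => [gw| |] // _.
case Egx: (Gamma x) (Gamma_proper x) (le_lt_trans (Gamma_le_phi x) x_dom) => [gx| |] // _ _.
move: (prox_obj_min_growth Gamma_proper Gamma_conv x_min w) y_gap.
rewrite /prox_obj Ey Egx Egw -!EFinD !lee_fin.
have -> : w - x = chi *: (y - u) - (x - u) by apply/rowP => i; rewrite !mxE; ring.
rewrite sqnorm_convex_comb -[u - xm]opprB sqnormN.
set nY := sqnorm (y - u); set nX := sqnorm (x - u); set nZ := sqnorm (_ - (x - u)).
set nM := sqnorm (xm - u) => gw_le w_growth y_gap.
have descent : (1 - chi) * (py - pu) + chi * (1 - chi) * (1 / (2 * lam) + mu / 2) * nY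
    + (nu / 2 + 1 / (2 * lam)) * nZ <= eps + (1 - chi) / (2 * lam) * nM.
  lra.
have := sigma_rate_le (x - u) (y - u) mu_ge0 nu_ge0 lam_gt0 chi_ge0 (ltW chi_lt1).
rewrite -/nX -/nY -/nZ => sigma_bound.
rewrite -subr_ge0 in descent; rewrite -subr_ge0 in sigma_bound.
set s1 := (X in 0 <= X) in descent; set s2 := (X in 0 <= X) in sigma_bound.
rewrite -subr_ge0 -(pmulr_rge0 _ (_ : 0 < 1 - chi)) ?subr_gt0 //.
(* (1 - chi) times the claim is 2 lam times the descent inequality plus the sigma bound. *)
rewrite (_ : (1 - chi) * _ = 2 * lam * s1 + s2).
  by rewrite addr_ge0 ?mulr_ge0 // ltW.
by rewrite /s1 /s2 /sigma -/(sigma_rate mu nu lam chi); field; rewrite !lt0r_neq0 // subr_gt0.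
Qed.
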